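(* Let $S_1,\ldots,S_m$ be formulas ($m\ge1$). The doxastic state $\emptyset[S_1,S_2,\ldots,S_m]$ coincides with $\emptyset[S_2,\ldots,S_m]$ if and only if, for every Q-combination $Q$ of $S_2,\ldots,S_m$, either $Q\models S_1$ or $Q\models\neg S_1$.
   Context: Propositional models are truth assignments over a finite set of variables; a formula used where a set of models is expected stands for its set of models. A doxastic state is a sequence $[C(0),\ldots,C(k)]$ of nonempty, pairwise disjoint sets of models covering all models; two doxastic states coincide when they are equal (equivalently, induce the same preorder $I\le J$ iff the class index of $I$ is at most that of $J$). The flat doxastic state $\emptyset$ is $[\text{all models}]$. Lexicographic revision: $C\,\mathrm{lex}(A) = [C(0)\cap A,\ldots,C(k)\cap A, C(0)\setminus A,\ldots,C(k)\setminus A]$, empty sets discarded. $\emptyset[S_1,\ldots,S_m]$ denotes $\emptyset$ revised lexicographically by $S_1$, then $S_2$, ..., then $S_m$. A Q-combination of formulas $T_1,\ldots,T_n$ is a formula $(B_1\equiv T_1)\wedge\cdots\wedge(B_n\equiv T_n)$ with each $B_i\in\{\mathsf{true},\mathsf{false}\}$ (for $n=0$ it is $\mathsf{true}$). *)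

From mathcomp Require Import all_boot.
Set Implicit Arguments. Unset Strict Implicit. Unset Printing Implicit Defensive.

(* Propositional models over n variables: truth assignments 'I_n -> bool.
   A formula is identified with its set of models. *)
Definition model (n : nat) := {ffun 'I_n -> bool}.
Definition formula (n : nat) := {set model n}.

(* A doxastic state: the sequence of classes [C(0); ...; C(k)]. *)
Definition doxstate (n : nat) := seq (formula n).

Definition wf_doxstate n (C : doxstate n) : Prop :=
  (forall X, X \in C -> X != set0) /\
  (forall i j, i < size C -> j < size C -> i != j ->
     [disjoint nth set0 C i & nth set0 C j]) /\
  (forall I : model n, exists2 X, X \in C & I \in X).

Definition flat n : doxstate n := [:: [set: model n]].

Definition lex n (C : doxstate n) (A : formula n) : doxstate n :=
  [seq X <- [seq X :&: A | X <- C] ++ [seq X :\: A | X <- C] | X != set0].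

Definition revs n (Ss : seq (formula n)) : doxstate n := foldl (@lex n) (flat n) Ss.

Definition beqv n (B : bool) (T : formula n) : formula n := if B then T else ~: T.

(* Q-combination (B_1 == T_1) /\ ... /\ (B_k == T_k), for bs = [B_1;...;B_k]
   with size bs = size Ts (empty conjunction = true). *)
Definition qcomb n (bs : seq bool) (Ts : seq (formula n)) : formula n :=
  \bigcap_(p <- zip bs Ts) beqv p.1 p.2.

Definition entails n (Q S : formula n) : bool := Q \subset S.

(* Unfiltered lexicographic revision commutes with discarding empty classes,
   so emptyset[T_1, ..., T_k] is the list of Q-combinations of T_1, ..., T_k
   with the empty ones removed, while emptyset[S, T_1, ..., T_k] replaces each
   Q of that unfiltered list by the pair S /\ Q, ~S /\ Q before removing empty
   classes.  Counting nonempty classes, the two agree exactly when S cuts no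
   Q-combination into two nonempty pieces, i.e. when each entails S or ~S. *)

From mathcomp Require Import all_boot.
Set Implicit Arguments. Unset Strict Implicit. Unset Printing Implicit Defensive.

Section SetListRefinement.
Variable T : finType.
Implicit Types (A S Q X : {set T}) (C P : seq {set T}) (Ts : seq {set T}).

Definition lex_raw C A : seq {set T} :=
  [seq X :&: A | X <- C] ++ [seq X :\: A | X <- C].

Definition qcombs Ts : seq {set T} := foldl lex_raw [:: setT] Ts.

Definition splitl S P : seq {set T} :=
  flatten [seq [:: S :&: Q; ~: S :&: Q] | Q <- P].

Definition decided S Q : bool := (Q \subset S) || (Q \subset ~: S).

Lemma filter_map_nonempty (g : {set T} -> {set T}) C : g set0 = set0 ->
  [seq X <- map g [seq Y <- C | Y != set0] | X != set0] =
  [seq X <- map g C | X != set0].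
Proof.
move=> g0; elim: C => //= X C IH.
by case: eqP => [->|_] /=; rewrite ?g0 ?eqxx IH.
Qed.

Lemma lex_raw_nonempty C A :
  [seq X <- lex_raw [seq Y <- C | Y != set0] A | X != set0] =
  [seq X <- lex_raw C A | X != set0].
Proof. by rewrite !filter_cat !filter_map_nonempty ?set0I ?set0D. Qed.

Lemma foldl_lex_raw C Ts :
  foldl lex_raw C Ts = flatten [seq [seq X :&: Q | X <- C] | Q <- qcombs Ts].
Proof.
elim/last_ind: Ts => [|Ts A IH].
  by rewrite /= cats0 -[LHS]map_id; apply: eq_map => X; rewrite setIT.
rewrite /qcombs !foldl_rcons -/(qcombs Ts) IH /lex_raw map_cat flatten_cat.
rewrite !map_flatten -!map_comp.
by congr (_ ++ _); congr flatten; apply: eq_map => Q /=; rewrite -map_comp;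
  apply: eq_map => X /=; [rewrite setIA | rewrite !setDE setIA].
Qed.

Lemma count_nonempty_split S Q :
  count (fun X => X != set0) [:: S :&: Q; ~: S :&: Q] =
  (Q != set0) + ~~ decided S Q.
Proof.
have [->|Q0] := eqVneq Q set0; first by rewrite /= !setI0 eqxx /decided sub0set.
have : ~~ ((Q \subset S) && (Q \subset ~: S)).
  by rewrite -subsetI setICr subset0.
rewrite /= !setI_eq0 !(disjoint_sym _ Q) !disjoints_subset setCK /decided.
by case: (Q \subset S); case: (Q \subset ~: S).
Qed.

Lemma count_nonempty_splitl S P :
  count (fun X => X != set0) (splitl S P) =
  count (fun X => X != set0) P + count (predC (decided S)) P.
Proof.
elim: P => // Q P IH.
have -> : splitl S (Q :: P) = [:: S :&: Q; ~: S :&: Q] ++ splitl S P by [].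
by rewrite count_cat IH count_nonempty_split /= addnACA.
Qed.

Lemma nonempty_splitlP S P :
  reflect ([seq X <- splitl S P | X != set0] = [seq X <- P | X != set0])
          (all (decided S) P).
Proof.
apply: (iffP allP) => [decP | ].
  rewrite filter_flatten -[P in RHS]flatten_seq1 filter_flatten -!map_comp.
  congr flatten; apply/eq_in_map => Q /decP.
  have disjQ R : Q \subset ~: R -> R :&: Q = set0.
    by move=> sQR; apply/eqP; rewrite setI_eq0 disjoint_sym disjoints_subset.
  by case/orP => sQ /=; rewrite (setIidPr sQ) disjQ ?setCK ?eqxx.
move/(congr1 size); rewrite !size_filter count_nonempty_splitl.
rewrite -[X in _ = X]addn0 => /addnI undecided0; apply/allP.
by rewrite -[all _ _]negbK -has_predC has_count undecided0.
Qed.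

End SetListRefinement.

Section Revision.
Variable n : nat.
Implicit Types (A S Q : formula n) (C : doxstate n) (Ts : seq (formula n)).

Lemma foldl_lex_nonempty C Ts :
  foldl (@lex n) [seq X <- C | X != set0] Ts =
  [seq X <- foldl (@lex_raw _) C Ts | X != set0].
Proof. by elim: Ts C => //= A Ts IH C; rewrite -IH -lex_raw_nonempty. Qed.

Lemma revs_qcombs Ts : revs Ts = [seq Q <- qcombs Ts | Q != set0].
Proof.
have setT_nonempty : [set: model n] != set0.
  by apply/set0Pn; exists [ffun _ => false].
by rewrite -foldl_lex_nonempty /= setT_nonempty.
Qed.

Lemma revs_cons S Ts :
  revs (S :: Ts) = [seq Q <- splitl S (qcombs Ts) | Q != set0].
Proof.
rewrite /revs /=.
have -> : lex (flat n) S = [seq X <- lex_raw (flat n) S | X != set0] by [].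
by rewrite foldl_lex_nonempty foldl_lex_raw /= setTI setTD.
Qed.

Lemma qcomb_rcons bs Ts b A : size bs = size Ts ->
  qcomb (rcons bs b) (rcons Ts A) = qcomb bs Ts :&: beqv b A.
Proof. by move=> sz; rewrite /qcomb zip_rcons // big_rcons. Qed.

Lemma mem_qcombs Ts Q :
  Q \in qcombs Ts <-> exists2 bs, size bs = size Ts & Q = qcomb bs Ts.
Proof.
elim/last_ind: Ts Q => [|Ts A IH] Q.
  rewrite inE /qcomb; split => [/eqP ->|[[] // _ ->]]; last by rewrite big_nil.
  by exists [::]; rewrite ?big_nil.
rewrite /qcombs foldl_rcons -/(qcombs Ts) mem_cat size_rcons; split.
  case/orP => /mapP [Q' /IH [bs sz ->] ->];
    [exists (rcons bs true) | exists (rcons bs false)];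
    by rewrite ?size_rcons ?sz // qcomb_rcons //= setDE.
case=> bs'; case/lastP: bs' => [|bs b]; first by [].
rewrite size_rcons => -[sz] ->; rewrite qcomb_rcons //.
have inQ : qcomb bs Ts \in qcombs Ts by apply/IH; exists bs.
by case: b; apply/orP; [left | right; rewrite -setDE]; apply: map_f.
Qed.

End Revision.

Theorem mainTheorem6 (n : nat) (S1 : formula n) (Ss : seq (formula n)) :
  revs (S1 :: Ss) = revs Ss <->
  (forall bs : seq bool, size bs = size Ss ->
     entails (qcomb bs Ss) S1 \/ entails (qcomb bs Ss) (~: S1)).
Proof.
rewrite revs_cons revs_qcombs; split.
  move=> /nonempty_splitlP /allP decided_all bs sz; apply/orP/decided_all.
  by apply/mem_qcombs; exists bs.
move=> entails_either; apply/nonempty_splitlP/allP => Q /mem_qcombs [bs sz ->].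
exact/orP/entails_either.
Qed.
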